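(* Let $p$ be a prime, $A$ a commutative ring with $\mathbb{Q}\subseteq A$, and $|$ a $p$-archimedean $p$-divisibility on $A$. For $a\in A$ put $\mathrm{ord}\,a=\sup\{m\in\mathbb{Z};\ p^m|a\}\in\mathbb{Z}\cup\{\infty\}$ and $\|a\|=p^{-\mathrm{ord}\,a}$ (with $p^{-\infty}=0$). Then for all $a,b\in A$ and $r\in\mathbb{Q}$: (a) $\|a+b\|\le\max(\|a\|,\|b\|)$; (b) $\|ab\|\le\|a\|\,\|b\|$; (c) $\|r\|=|r|_p$; (d) $\|ra\|=|r|_p\|a\|$.
   Context: A divisibility on $A$ is a binary relation $|\subseteq A\times A$ such that for all $a,b,c$: (1) $a|a$; (2) $a|b,\ b|c\Rightarrow a|c$; (3) $a|b,\ a|c\Rightarrow a|b-c$; (4) $a|b\Rightarrow ac|bc$; (5) $0\nmid1$. A $p$-divisibility additionally satisfies for all $a,b$: (6) $0\nmid a\Rightarrow pa\nmid a$; (7) $p[(a^pb-b^pa)^2-(b^{p+1})^2]\ \big|\ (a^pb-b^pa)b^{p+1}$. It is $p$-archimedean if for every $a$ there is $m\in\mathbb{Z}$ with $p^m|a$. $|r|_p=p^{-v_p(r)}$ is the $p$-adic absolute value. *)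

From mathcomp Require Import all_boot all_order all_algebra.
From Stdlib Require Import ClassicalEpsilon.
Set Implicit Arguments. Unset Strict Implicit. Unset Printing Implicit Defensive.
Import Order.TTheory GRing.Theory Num.Theory.
Local Open Scope ring_scope.

Section Divisibility.
Variables (A : comUnitRingType) (p : nat) (dv : A -> A -> Prop).

Definition divisibility : Prop :=
  [/\ (forall a, dv a a),
      (forall a b c, dv a b -> dv b c -> dv a c),
      (forall a b c, dv a b -> dv a c -> dv a (b - c)),
      (forall a b c, dv a b -> dv (a * c) (b * c)) &
      ~ dv 0 1].

Definition p_divisibility : Prop :=
  [/\ divisibility,
      (forall a, ~ dv 0 a -> ~ dv (p%:R * a) a) &
      (forall a b : A,
         dv (p%:R * ((a ^+ p * b - b ^+ p * a) ^+ 2 - (b ^+ p.+1) ^+ 2))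
            ((a ^+ p * b - b ^+ p * a) * b ^+ p.+1))].

(* p ^ m for m : int, computed in A (p is a unit when Q ⊆ A) *)
Definition ppow (m : int) : A := (p%:R : A) ^ m.

Definition p_archimedean : Prop := forall a : A, exists m : int, dv (ppow m) a.

Definition is_max_ord (a : A) (m : int) : Prop :=
  dv (ppow m) a /\ forall m' : int, dv (ppow m') a -> m' <= m.

(* ord a = sup {m in Z ; p^m | a} in Z ∪ {oo}; None stands for oo.
   (For a p-archimedean divisibility the set is nonempty, so the sup is
   either a maximum or +oo.) *)
Definition ord (a : A) : option int :=
  match excluded_middle_informative (exists m, is_max_ord a m) with
  | left H => Some (proj1_sig (constructive_indefinite_description _ H))
  | right _ => None
  end.

Definition pnorm (a : A) : rat :=
  match ord a with
  | Some m => (p%:R : rat) ^ (- m)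
  | None => 0
  end.

End Divisibility.

Definition padic_val (p : nat) (r : rat) : int :=
  (logn p `|numq r|%N)%:Z - (logn p `|denq r|%N)%:Z.

Definition padic_abs (p : nat) (r : rat) : rat :=
  if r == 0 then 0 else (p%:R : rat) ^ (- padic_val p r).

From mathcomp Require Import all_boot all_order all_algebra.
From mathcomp Require Import ring.
From Stdlib Require Import Classical ClassicalEpsilon.
Import Order.TTheory GRing.Theory Num.Theory.
Local Open Scope ring_scope.
Set Implicit Arguments. Unset Strict Implicit.

(* The set {m ; p^m | a} is downward closed, so ord a >= m exactly when p^m | a.
   Then (a) and (b) come from p^m | a, p^n | b ==> p^min(m,n) | a + b and
   p^(m+n) | a b.  A nonzero rational is r = p^v u where u and u^-1 are divisible
   by 1: for u^-1 = 1/m with m prime to p, write 1/m = x + y p^k/m by Bezout, where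
   p^(-k) | 1/m by the archimedean property.  Hence multiplication by r shifts ord
   by exactly v, which is (d); axiom (6) gives ord 1 = 0, whence (c). *)

Section DivisibilityTheory.
Variables (A : comUnitRingType) (dv : A -> A -> Prop).
Hypothesis hdv : divisibility dv.

Lemma dvxx a : dv a a. Proof. by case: hdv. Qed.

Lemma dv_trans a b c : dv a b -> dv b c -> dv a c.
Proof. by case: hdv => _ + _ _ _; apply. Qed.

Lemma dvB a b c : dv a b -> dv a c -> dv a (b - c).
Proof. by case: hdv => _ _ + _ _; apply. Qed.

Lemma dvMr a b c : dv a b -> dv (a * c) (b * c).
Proof. by case: hdv => _ _ _ + _; apply. Qed.

Lemma dv0 a : dv a 0.
Proof. by rewrite -(subrr a); apply: dvB; apply: dvxx. Qed.

Lemma dvN a b : dv a b -> dv a (- b).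
Proof. by move=> hb; rewrite -sub0r; apply: dvB hb; apply: dv0. Qed.

Lemma dvD a b c : dv a b -> dv a c -> dv a (b + c).
Proof. by move=> hb hc; rewrite -(opprK c); apply/dvB/dvN. Qed.

Lemma dv1_natr n : dv 1 n%:R.
Proof. by elim: n => [|n IHn]; [apply: dv0 | rewrite mulrS; apply/dvD/IHn/dvxx]. Qed.

Lemma dv1_intr z : dv 1 z%:~R.
Proof. by case: z => n; rewrite ?NegzE ?rmorphN; [|apply: dvN]; apply: dv1_natr. Qed.

Lemma dvMl c a b : dv 1 c -> dv a b -> dv a (c * b).
Proof.
move=> hc hab; have := dvMr a hc; rewrite mul1r => /dv_trans; apply.
by rewrite mulrC [c * b]mulrC; apply: dvMr.
Qed.

Lemma dv1M x y : dv 1 x -> dv 1 y -> dv 1 (x * y).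
Proof. exact: dvMl. Qed.

Lemma dv_cancelr c w x y : c * w = 1 -> dv (x * c) (y * c) -> dv x y.
Proof. by move=> hcw /(dvMr w); rewrite -!mulrA hcw !mulr1. Qed.

Definition dv_unit (u : A) : Prop := exists w, [/\ u * w = 1, dv 1 u & dv 1 w].

Lemma dv_unitM u v : dv_unit u -> dv_unit v -> dv_unit (u * v).
Proof.
move=> [w [huw hu hw]] [w' [hvw hv hw']]; exists (w * w'); split; last 2 first.
- exact: dv1M.
- exact: dv1M.
by rewrite mulrACA huw hvw mulr1.
Qed.

Lemma dv_unit_mull u x y : dv_unit u -> dv x (u * y) <-> dv x y.
Proof.
move=> [w [huw hu hw]]; split=> [/(dvMl hw)|]; last exact: dvMl.
by rewrite mulrA [w * u]mulrC huw mul1r.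
Qed.

End DivisibilityTheory.

Section PAdicOrder.
Variables (A : comUnitRingType) (p : nat) (dv : A -> A -> Prop).
Hypotheses (p_prime : prime p)
  (unitQ : forall n : nat, (n.+1%:R : A) \is a GRing.unit)
  (hdv : divisibility dv).

Local Notation ppow := (ppow A p).

Lemma natr_unit n : (0 < n)%N -> (n%:R : A) \is a GRing.unit.
Proof. by case: n. Qed.

Lemma unit_p : (p%:R : A) \is a GRing.unit.
Proof. exact/natr_unit/prime_gt0. Qed.

Lemma unit_p_rat : (p%:R : rat) \is a GRing.unit.
Proof. by rewrite unitfE pnatr_eq0 -lt0n prime_gt0. Qed.

Lemma ppowD m n : ppow (m + n) = ppow m * ppow n.
Proof. exact/exprzDr/unit_p. Qed.

Lemma ppowNr v : ppow v * ppow (- v) = 1.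
Proof. by rewrite -ppowD subrr. Qed.

Lemma dv1_ppow (k : nat) : dv 1 (ppow k).
Proof.
have -> : ppow k = (p ^ k)%:R by rewrite natrX.
exact: dv1_natr.
Qed.

Lemma dv_ppow_le m n a : m <= n -> dv (ppow n) a -> dv (ppow m) a.
Proof.
rewrite -subr_ge0 => /gez0_abs hnm; apply: dv_trans => //.
rewrite -(subrKC m n) ppowD -hnm mulrC; apply: dvMl (dvxx hdv _) => //.
exact: dv1_ppow.
Qed.

Lemma dv_ppowM m n a b :
  dv (ppow m) a -> dv (ppow n) b -> dv (ppow (m + n)) (a * b).
Proof.
move=> ha hb; rewrite ppowD; apply: dv_trans (dvMr hdv _ ha) _ => //.
by rewrite mulrC [a * b]mulrC; apply: dvMr.
Qed.

Lemma dv_ppow_mull v m y : dv (ppow m) (ppow v * y) <-> dv (ppow (m - v)) y.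
Proof.
split=> [h | /(dvMr hdv (ppow v))].
  by apply: (dv_cancelr hdv (ppowNr v)); rewrite -ppowD subrK [y * _]mulrC.
by rewrite -ppowD subrK mulrC.
Qed.

Hypothesis harch : p_archimedean p dv.

Lemma dv1_invn_coprime m : (0 < m)%N -> coprime p m -> dv 1 (m%:R : A)^-1.
Proof.
move=> m_gt0 cop_pm; have m_unit := natr_unit m_gt0.
case: (harch (m%:R^-1)) => -[k|k] hk.
  by apply: dv_trans hk => //; apply: dv1_ppow.
set K := (p ^ k.+1)%N.
have K_unit : (K%:R : A) \is a GRing.unit by apply/natr_unit; rewrite expn_gt0 prime_gt0.
have hK : dv 1 ((m%:R)^-1 * K%:R).
  by move: (dvMr hdv (K%:R) hk); rewrite /ppow /K natrX mulVr // -natrX.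
have /coprimezP[[x y] /= bezout] : coprimez m%:Z K%:Z.
  by rewrite coprimezE !absz_nat coprime_sym coprimeXl.
have bezoutA : x%:~R * (m%:R : A) + y%:~R * K%:R = 1.
  by move/(congr1 (fun z : int => (z%:~R : A))): bezout; rewrite rmorphD !rmorphM.
have -> : (m%:R : A)^-1 = x%:~R + y%:~R * ((m%:R)^-1 * K%:R).
  apply: (mulIr m_unit); rewrite mulVr // -[in LHS]bezoutA mulrDl -mulrA.
  by rewrite (mulrAC _ K%:R) mulVr // mul1r.
by apply: dvD => //; [apply: dv1_intr | apply: dv1M => //; apply: dv1_intr].
Qed.

Lemma dv_unit_natr_coprime m : (0 < m)%N -> coprime p m -> dv_unit dv (m%:R : A).
Proof.
move=> m_gt0 cop_pm; exists (m%:R^-1); split.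
- exact/mulrV/natr_unit.
- exact: dv1_natr.
- exact: dv1_invn_coprime.
Qed.

Lemma dv_unit_invn_coprime m : (0 < m)%N -> coprime p m -> dv_unit dv (m%:R : A)^-1.
Proof.
move=> m_gt0 cop_pm; exists (m%:R); split.
- exact/mulVr/natr_unit.
- exact: dv1_invn_coprime.
- exact: dv1_natr.
Qed.

Lemma dv_unit_sign (b : bool) : dv_unit dv ((-1) ^+ b).
Proof.
have h1 : dv 1 ((-1) ^+ b : A).
  by case: b; rewrite ?expr1 ?expr0; [apply: (dvN hdv) |]; apply: dvxx.
by exists ((-1) ^+ b); split; rewrite // -signr_addb addbb.
Qed.

Lemma ratr_ppow_dv_unit r :
  r != 0 -> exists2 u, dv_unit dv u & ratr r = ppow (padic_val p r) * u.
Proof.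
move=> r_neq0.
have num_gt0 : (0 < `|numq r|)%N by rewrite absz_gt0 numq_eq0.
have den_gt0 : (0 < `|denq r|)%N by rewrite absz_gt0 denq_eq0.
have [m1 cop1 hnum] := pfactor_coprime p_prime num_gt0.
have [m2 cop2 hden] := pfactor_coprime p_prime den_gt0.
have m1_gt0 : (0 < m1)%N by move: num_gt0; rewrite hnum muln_gt0 => /andP[].
have m2_gt0 : (0 < m2)%N by move: den_gt0; rewrite hden muln_gt0 => /andP[].
set s : A := (-1) ^+ (numq r < 0)%R.
exists (s * m1%:R * (m2%:R)^-1).
  apply: (dv_unitM hdv); last exact: dv_unit_invn_coprime.
  by apply: (dv_unitM hdv); [apply: dv_unit_sign | apply: dv_unit_natr_coprime].
have num_eq : ((numq r)%:~R : A) = s * (m1%:R * p%:R ^+ logn p `|numq r|).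
  rewrite {1}[numq r]numEsign rmorphM /= rmorph_sign -abszE -pmulrn.
  by rewrite {1}hnum natrM natrX.
have den_eq : ((denq r)%:~R : A) = m2%:R * p%:R ^+ logn p `|denq r|.
  by rewrite -[denq r](gez0_abs (denq_ge0 r)) /= -pmulrn {1}hden natrM natrX.
rewrite /ratr num_eq den_eq /ppow /padic_val exprzDr ?unit_p // -exprnN.
rewrite invrM ?natr_unit ?unitrX ?unit_p //.
by rewrite (_ : (p%:R : A) ^ (Posz _) = p%:R ^+ logn p `|numq r|) //; ring.
Qed.

Lemma ord_cases a : (exists m, is_max_ord p dv a m) \/ (forall m, dv (ppow m) a).
Proof.
case: (classic (exists m, is_max_ord p dv a m)) => [|no_max]; [by left | right].
case: (harch a) => m0 h0.
(* without a maximum, p^(m0+k) | a propagates from k to k+1 *)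
have hk (k : nat) : dv (ppow (m0 + k%:Z)) a.
  elim: k => [|k IHk]; first by rewrite addr0.
  apply: NNPP => hn; apply: no_max; exists (m0 + k%:Z); split => // m' hm'.
  rewrite leNgt; apply/negP => hlt; apply/hn/(dv_ppow_le _ hm').
  by rewrite -addn1 PoszD addrA lezD1.
move=> m; case: (lerP m m0) => [hm | /ltW]; first exact: dv_ppow_le h0.
by rewrite -subr_ge0 => /gez0_abs hm; rewrite -(subrKC m0 m) -hm.
Qed.

Lemma pnorm_max_ord a m : is_max_ord p dv a m -> pnorm p dv a = (p%:R : rat) ^ (- m).
Proof.
move=> [hm max_m]; rewrite /pnorm /ord.
case: excluded_middle_informative => [H|[]]; last by exists m.
case: constructive_indefinite_description => m' /= [hm' max_m'].
by have -> // : m' = m; apply/eqP; rewrite eq_le max_m // max_m'.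
Qed.

Lemma pnorm_inf a : (forall m, dv (ppow m) a) -> pnorm p dv a = 0.
Proof.
move=> hall; rewrite /pnorm /ord.
case: excluded_middle_informative => // H.
case: constructive_indefinite_description => m' /= [_ max_m'].
by have := max_m' (m' + 1) (hall _); rewrite gerDl.
Qed.

Lemma pnorm_le_ppowP n a : pnorm p dv a <= (p%:R : rat) ^ (- n) <-> dv (ppow n) a.
Proof.
have p_gt1 : 1 < (p%:R : rat) by rewrite ltr1n prime_gt1.
case: (ord_cases a) => [[m [hm max_m]] | hall]; last first.
  by rewrite pnorm_inf //; split=> // _; apply: exprz_ge0; rewrite ler0n.
rewrite (pnorm_max_ord (conj hm max_m)) ler_eXz2l // lerN2.
by split=> [/dv_ppow_le|]; [apply | apply: max_m].
Qed.

Lemma pnorm_leP a b :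
  pnorm p dv a <= pnorm p dv b <-> forall n, dv (ppow n) b -> dv (ppow n) a.
Proof.
split=> [hab n /pnorm_le_ppowP hb | hba]; first exact/pnorm_le_ppowP/(le_trans hab).
case: (ord_cases b) => [[m hm] | hall].
  by rewrite (pnorm_max_ord hm); apply/pnorm_le_ppowP/hba; case: hm.
by rewrite !pnorm_inf // => m; apply: hba.
Qed.

Lemma pnormD_le_max a b : pnorm p dv (a + b) <= Num.max (pnorm p dv a) (pnorm p dv b).
Proof.
wlog hba : a b / pnorm p dv b <= pnorm p dv a.
  by move=> hwlog; case/orP: (le_total (pnorm p dv b) (pnorm p dv a));
    [|rewrite maxC addrC]; apply: hwlog.
rewrite max_l //; apply/pnorm_leP => n ha.
by apply: (dvD hdv ha); apply: (pnorm_leP b a).1 hba n ha.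
Qed.

Lemma pnormM_le a b : pnorm p dv (a * b) <= pnorm p dv a * pnorm p dv b.
Proof.
case: (ord_cases a) => [[m hm] | hall]; last first.
  rewrite (pnorm_inf hall) mul0r pnorm_inf // => n.
  by case: (harch b) => k hk; rewrite -(subrK k n); apply: dv_ppowM.
case: (ord_cases b) => [[k hk] | hall]; last first.
  rewrite (pnorm_inf hall) mulr0 pnorm_inf // => n.
  by rewrite -(subrKC m n); apply: dv_ppowM; case: hm.
rewrite (pnorm_max_ord hm) (pnorm_max_ord hk) -exprzDr ?unit_p_rat // -opprD.
by apply/pnorm_le_ppowP/dv_ppowM; [case: hm | case: hk].
Qed.

Lemma pnorm_shift v a b :
  (forall m, dv (ppow m) b <-> dv (ppow (m - v)) a) ->
  pnorm p dv b = (p%:R : rat) ^ (- v) * pnorm p dv a.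
Proof.
move=> shift; case: (ord_cases a) => [[m [hm max_m]] | hall]; last first.
  by rewrite !pnorm_inf ?mulr0 // => m; apply/shift.
have hmax : is_max_ord p dv b (m + v).
  by split=> [|m' /shift /max_m]; [apply/shift; rewrite addrK | rewrite lerBlDr].
rewrite (pnorm_max_ord hmax) (pnorm_max_ord (conj hm max_m)) opprD.
by rewrite exprzDr ?unit_p_rat // mulrC.
Qed.

Lemma pnorm_ratrM r a : pnorm p dv (ratr r * a) = padic_abs p r * pnorm p dv a.
Proof.
rewrite /padic_abs; case: eqP => [-> | /eqP r_neq0].
  by rewrite mul0r [ratr 0]/ratr /= !mul0r pnorm_inf // => m; apply: dv0.
have [u hu ->] := ratr_ppow_dv_unit r_neq0.
apply: pnorm_shift => m.
by rewrite -mulrA dv_ppow_mull (dv_unit_mull hdv).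
Qed.

End PAdicOrder.

Lemma pnorm1 (A : comUnitRingType) (p : nat) (dv : A -> A -> Prop) :
  prime p -> (forall n : nat, (n.+1%:R : A) \is a GRing.unit) ->
  p_divisibility p dv -> pnorm p dv 1 = 1.
Proof.
move=> p_prime unitQ [hdv p_ndv _].
suff hmax : is_max_ord p dv 1 0 by rewrite (pnorm_max_ord hmax).
split=> [|m hm]; first exact: dvxx.
rewrite leNgt; apply/negP; rewrite -lezD1 add0r.
move=> /(dv_ppow_le p_prime unitQ hdv)/(_ hm).
by rewrite /ppow expr1z -[X in dv X _]mulr1; apply: p_ndv; case: hdv.
Qed.

Theorem lemma4p2 (p : nat) (hp : prime p) (A : comUnitRingType)
  (hQ : forall n : nat, (n.+1%:R : A) \is a GRing.unit)
  (dv : A -> A -> Prop)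
  (hdv : p_divisibility p dv) (harch : p_archimedean p dv) :
  forall (a b : A) (r : rat),
  [/\ pnorm p dv (a + b) <= Num.max (pnorm p dv a) (pnorm p dv b),
      pnorm p dv (a * b) <= pnorm p dv a * pnorm p dv b,
      pnorm p dv (ratr r) = padic_abs p r &
      pnorm p dv (ratr r * a) = padic_abs p r * pnorm p dv a].
Proof.
move=> a b r; have hd : divisibility dv by case: hdv.
have hr := pnorm_ratrM hp hQ hd harch r.
split; [exact: pnormD_le_max | exact: pnormM_le | | exact: hr].
by rewrite -[ratr r]mulr1 hr (pnorm1 hp hQ hdv) mulr1.
Qed.
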